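(* Let $M=(X,rk)$ be a matroid on a finite ground set $X$ with rank $r=rk(X)$. Then for every integer $j$ with $j>f_2(M)-r$, \[[y^j]T_M(1,y)=\binom{|X|-j-1}{r-1}-\sum_{\substack{H\in \mathcal{H}(M),\\ |H|>f_2(M)}} \binom{|H|-j-1}{r-1}.\]
   Context: $T_M(x,y)=\sum_{A\subseteq X}(x-1)^{r-rk(A)}(y-1)^{|A|-rk(A)}$ is the Tutte polynomial of $M$, and $[y^j]f(y)$ denotes the coefficient of $y^j$ in $f$. The closure of $A\subseteq X$ is $cl_M(A)=\{e\in X: rk(A\cup\{e\})=rk(A)\}$; a flat is a set $F$ with $cl_M(F)=F$; a hyperplane is a flat of rank $r-1$, and $\mathcal{H}(M)$ is the set of all hyperplanes of $M$. For $k\ge 1$, $f_k(M)=\max\{|F|: F \text{ a flat of } M,\ rk(F)=r-k\}$. *)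

From mathcomp Require Import all_boot all_order all_algebra.
Set Implicit Arguments. Unset Strict Implicit. Unset Printing Implicit Defensive.
Import Order.TTheory GRing.Theory Num.Theory.

(* A matroid on the finite ground set X = [set: T], given by its rank function. *)
Definition is_matroid (T : finType) (rk : {set T} -> nat) : Prop :=
  [/\ forall A : {set T}, rk A <= #|A|,
      forall A B : {set T}, A \subset B -> rk A <= rk B
    & forall A B : {set T}, rk (A :|: B) + rk (A :&: B) <= rk A + rk B].

Section MatroidDefs.
Variables (T : finType) (rk : {set T} -> nat).

Definition mrank : nat := rk [set: T].

Definition closure (A : {set T}) : {set T} := [set e | rk (e |: A) == rk A].

Definition is_flat (F : {set T}) : bool := closure F == F.

Definition is_hyperplane (H : {set T}) : bool :=
  is_flat H && (rk H == mrank - 1).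

Definition fk (k : nat) : nat :=
  \max_(F : {set T} | is_flat F && (rk F == mrank - k)) #|F|.

(* The Tutte polynomial specialised at x (an integer), as a polynomial in y:
   T_M(x,y) = sum_A (x-1)^(r - rk A) (y-1)^(|A| - rk A). *)
Definition tutte_at_x (x : int) : {poly int} :=
  \sum_(A : {set T}) ((x - 1) ^+ (mrank - rk A))%:P * ('X - 1) ^+ (#|A| - rk A).

End MatroidDefs.

Definition coefz (p : {poly int}) (j : int) : int :=
  match j with Posz n => p`_n | Negz _ => 0 end.

(* Binomial coefficient with integer top: binom(n, k) = 0 for n < 0. *)
Definition binz (n : int) (k : nat) : int :=
  match n with Posz m => ('C(m, k))%:Z | Negz _ => 0 end.

From Pilot Require Import Defs.
From mathcomp Require Import all_boot all_order all_algebra zify.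
Import Order.TTheory GRing.Theory Num.Theory.
Set Implicit Arguments. Unset Strict Implicit. Unset Printing Implicit Defensive.

(* Only spanning sets contribute to T_M(1,y), a spanning set A contributing
   (y-1)^(|A|-r), and sets with at most f_2(M) elements do not reach y^j.
   A non-spanning set with more than f_2(M) elements lies in exactly one
   hyperplane, because two distinct hyperplanes meet in a flat of rank at most
   r-2.  Hence, on large sets, summing over spanning sets is summing over all
   sets minus summing over the subsets of each large hyperplane, and summing
   (y-1)^(|A|-r) over the subsets A of an m-set gives a polynomial whose y^j
   coefficient is binom(m-j-1, r-1).  For j = -1 the same inclusion-exclusion,
   applied to the (r-1)-subsets, shows that the right-hand side vanishes. *)


Section Matroid.
Variables (T : finType) (rk : {set T} -> nat).
Hypothesis rkM : is_matroid rk.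
Implicit Types A B F H : {set T}.
Local Notation r := (mrank rk).
Local Notation is_flat := (is_flat rk).
Local Notation is_hyperplane := (is_hyperplane rk).

Lemma rk_le_card A : rk A <= #|A|.
Proof. by case: rkM. Qed.

Lemma rk_mono A B : A \subset B -> rk A <= rk B.
Proof. by case: rkM => _ + _; apply. Qed.

Lemma rk_submod A B : rk (A :|: B) + rk (A :&: B) <= rk A + rk B.
Proof. by case: rkM. Qed.

Lemma rk_le_mrank A : rk A <= r.
Proof. exact/rk_mono/subsetT. Qed.

Lemma rk_setU1 e A : rk (e |: A) <= (rk A).+1.
Proof.
have := rk_submod [set e] A; have := rk_le_card [set e]; rewrite cards1; lia.
Qed.

Lemma flat_of_rank A t : rk A <= t <= r ->
  exists2 F : {set T}, A \subset F & is_flat F && (rk F == t).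
Proof.
move=> /andP[rkA tr].
pose P F := (A \subset F) && (rk F <= t).
have [|F /andP[sAF rkF] maxF] := @arg_maxnP _ A P (fun F => #|F|).
  by rewrite /P subxx.
have grow e : e \notin F -> t < rk (e |: F).
  move=> eF; rewrite ltnNge; apply/negP => rk_eF.
  have /= := maxF (e |: F); rewrite /P (subset_trans sAF (subsetUr _ _)) rk_eF.
  by rewrite cardsU1 eF => /(_ isT); rewrite /= add1n ltnn.
have rkFt : rk F = t.
  apply/eqP; rewrite eqn_leq rkF leqNgt; apply/negP => ltFt.
  have /subsetPn[e _ eF] : ~~ ([set: T] \subset F).
    by apply: contraTN ltFt => /rk_mono; move: tr; rewrite /mrank -leqNgt; lia.
  by have := grow e eF; have := rk_setU1 e F; lia.
exists F => //; rewrite rkFt eqxx andbT; apply/eqP/setP => e; rewrite inE.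
have [eF|eF] := boolP (e \in F); first by rewrite (setUidPr _) ?eqxx ?sub1set.
by apply/eqP => rk_eF; have := grow e eF; rewrite rk_eF rkFt ltnn.
Qed.

Lemma card_flat_le_fk F k : is_flat F -> rk F = r - k -> #|F| <= fk rk k.
Proof. by move=> flatF rkF; apply: leq_bigmax_cond; rewrite flatF rkF eqxx. Qed.

Lemma mrank_sub_le_fk k : r - k <= fk rk k.
Proof.
have rk0 : rk set0 <= r - k <= r.
  by rewrite leq_subr andbT; have := rk_le_card set0; rewrite cards0; lia.
have [F _ /andP[flatF /eqP rkF]] := flat_of_rank rk0.
by rewrite -{1}rkF; apply: leq_trans (rk_le_card F) (card_flat_le_fk flatF rkF).
Qed.

Lemma rk_setU1_hyperplane H e : is_hyperplane H -> e \notin H -> rk (e |: H) = r.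
Proof.
move=> /andP[/eqP clH /eqP rkH] eH.
have : e \notin Defs.closure rk H by rewrite clH.
rewrite inE rkH => /eqP rk_eH.
by have := rk_le_mrank (e |: H); have := rk_mono (subsetUr [set e] H); lia.
Qed.

Lemma rk_setI_hyperplanes H1 H2 :
  is_hyperplane H1 -> is_hyperplane H2 -> H1 != H2 -> rk (H1 :&: H2) <= r - 2.
Proof.
wlog [e eH2 eH1] : H1 H2 / exists2 e, e \in H2 & e \notin H1.
  move=> gen hypH1 hypH2 neqH; move: (neqH).
  rewrite eqEsubset negb_and => /orP[]/subsetPn[e eH1 eH2].
    by rewrite setIC; apply: gen; rewrite 1?eq_sym //; exists e.
  by apply: gen => //; exists e.
move=> hypH1 hypH2 _.
have rk_eH1 := rk_setU1_hyperplane hypH1 eH1.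
have /rk_mono : e |: H1 \subset H1 :|: H2 by rewrite setUC setUS ?sub1set.
have := rk_submod H1 H2; move: hypH1 hypH2 => /andP[_ /eqP] + /andP[_ /eqP]; lia.
Qed.

Lemma card_sub_hyperplanes H1 H2 A :
  is_hyperplane H1 -> is_hyperplane H2 -> H1 != H2 ->
  A \subset H1 -> A \subset H2 -> #|A| <= fk rk 2.
Proof.
move=> hypH1 hypH2 neqH sAH1 sAH2.
have rkI : rk (H1 :&: H2) <= r - 2 <= r.
  by rewrite rk_setI_hyperplanes ?leq_subr.
have [F sIF /andP[flatF /eqP rkF]] := flat_of_rank rkI.
have sAF : A \subset F by rewrite (subset_trans _ sIF) // subsetI sAH1.
exact: leq_trans (subset_leq_card sAF) (card_flat_le_fk flatF rkF).
Qed.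

Lemma exists_hyperplane_sup A : rk A < r -> exists2 H, is_hyperplane H & A \subset H.
Proof.
move=> rkA; have rkA1 : rk A <= r - 1 <= r by rewrite leq_subr; lia.
have [H sAH /andP[flatH rkH]] := flat_of_rank rkA1.
by exists H; rewrite // /Defs.is_hyperplane flatH.
Qed.

Lemma card_hyperplanes_sup A : 0 < r -> fk rk 2 < #|A| ->
  #|[set H | is_hyperplane H & A \subset H]| = (rk A < r).
Proof.
move=> r_gt0 bigA; have [rkA|rkA] := ltnP (rk A) r.
  have [H0 hypH0 sAH0] := exists_hyperplane_sup rkA.
  apply/eqP/cards1P; exists H0; apply/setP => H; rewrite !inE.
  have [->|neqH] := eqVneq H H0; first by rewrite hypH0 sAH0.
  apply/negbTE/andP=> -[hypH sAH].
  by have := card_sub_hyperplanes hypH hypH0 neqH sAH sAH0; rewrite leqNgt bigA.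
apply/eqP; rewrite cards_eq0; apply/eqP/setP => H; rewrite !inE.
apply/negbTE/andP=> -[/andP[_ /eqP rkH] /rk_mono]; lia.
Qed.

End Matroid.

Local Open Scope ring_scope.

Lemma sum_subsets_card (V : nmodType) (T : finType) (B : {set T}) (F : nat -> V) :
  \sum_(A : {set T} | A \subset B) F #|A| = \sum_(k < #|B|.+1) F k *+ 'C(#|B|, k).
Proof.
rewrite (partition_big (fun A : {set T} => inord #|A| : 'I_#|B|.+1) xpredT) //=.
apply: eq_bigr => k _; rewrite -cards_draws -sumr_const.
apply: eq_big => [A|A /andP[sAB /eqP <-]]; rewrite ?inE.
  by case sAB: (A \subset B); rewrite //= -val_eqE /= inordK // ltnS subset_leq_card.
by rewrite inordK // ltnS subset_leq_card.
Qed.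

Lemma sum_subsets_card_eq (R : pzSemiRingType) (T : finType) (B : {set T}) k :
  \sum_(A : {set T} | A \subset B) (#|A| == k)%:R = 'C(#|B|, k)%:R :> R.
Proof.
rewrite -cards_draws -sumr_const big_mkcond [RHS]big_mkcond /=.
by apply: eq_bigr => A _; rewrite inE; case: (_ \subset _); case: eqP.
Qed.

Section NullityPow.
Variable R : nzRingType.

Definition nullity_pow (r k : nat) : {poly R} :=
  if (r <= k)%N then ('X - 1) ^+ (k - r) else 0.

Definition nullity_pow_sum (r m : nat) : {poly R} :=
  \sum_(k < m.+1) nullity_pow r k *+ 'C(m, k).

Lemma nullity_pow_sum0r m : nullity_pow_sum 0 m = 'X^m.
Proof.
rewrite /nullity_pow_sum -(subrK 1 'X) exprD1n.
by apply: eq_bigr => k _; rewrite /nullity_pow subn0.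
Qed.

Lemma nullity_pow_sumS0 r : nullity_pow_sum r.+1 0 = 0.
Proof. by rewrite /nullity_pow_sum big_ord1 /nullity_pow mul0rn. Qed.

Lemma nullity_powSS r k : nullity_pow r.+1 k.+1 = nullity_pow r k.
Proof. by rewrite /nullity_pow ltnS subSS. Qed.

Lemma nullity_pow_sumSS r m :
  nullity_pow_sum r.+1 m.+1 = nullity_pow_sum r.+1 m + nullity_pow_sum r m.
Proof.
rewrite /nullity_pow_sum big_ord_recl {1}/nullity_pow /= mul0rn add0r.
under eq_bigr do rewrite binS mulrnDr nullity_powSS.
rewrite big_split /=; congr (_ + _).
rewrite big_ord_recr [RHS]big_ord_recl /= bin_small // mulr0n addr0.
by rewrite {2}/nullity_pow mul0rn add0r; under eq_bigr do rewrite -nullity_powSS.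
Qed.

Lemma coef_nullity_pow_sum r m n :
  (nullity_pow_sum r.+1 m)`_n = (if (n < m)%N then 'C(m - n.+1, r) else 0%N)%:R.
Proof.
elim: r m n => [|r IHr] m n; elim: m n => [|m IHm] n;
  rewrite ?nullity_pow_sumS0 ?coef0 // nullity_pow_sumSS coefD IHm.
  rewrite nullity_pow_sum0r coefXn !bin0.
  by rewrite ltnS (leq_eqVlt n) orbC; case: (ltngtP n m) => _ /=; rewrite ?addr0 ?add0r.
rewrite IHr ltnS -natrD; case: (ltngtP n m) => [lt_nm|//|<-]; last first.
  by rewrite subnn bin0n.
by rewrite subSn // binS.
Qed.

Lemma coef_nullity_pow_small r k n : (k < n + r)%N -> (nullity_pow r k)`_n = 0.
Proof.
move=> lt_k; rewrite /nullity_pow; case: ifP => [le_rk|_]; last by rewrite coef0.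
by apply: nth_default; rewrite -polyC1 size_exp_XsubC; lia.
Qed.

End NullityPow.

Lemma binz_subn (m n k : nat) :
  binz (m%:Z - n%:Z - 1) k = (if (n < m)%N then 'C(m - n.+1, k) else 0%N)%:R.
Proof.
case: ltnP => [lt_nm|le_mn]; rewrite ?natz.
  by have -> : m%:Z - n%:Z - 1 = (m - n.+1)%N by lia.
have : m%:Z - n%:Z - 1 < 0 by lia.
by case: (_ - _ - _).
Qed.

Lemma coef_sum_subsets_nullity_pow (T : finType) (B : {set T}) r n : (0 < r)%N ->
  \sum_(A : {set T} | A \subset B) (nullity_pow int r #|A|)`_n =
    binz (#|B|%:Z - n%:Z - 1) r.-1.
Proof.
case: r => // r _.
by rewrite -coef_sum sum_subsets_card coef_nullity_pow_sum binz_subn.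
Qed.

Section TutteCoefficients.
Variables (T : finType) (rk : {set T} -> nat).
Hypothesis rkM : is_matroid rk.
Implicit Types A H : {set T}.
Local Notation r := (mrank rk).
Local Notation is_hyperplane := (is_hyperplane rk).

Lemma sum_spanning (V : zmodType) (c : {set T} -> V) : (0 < r)%N ->
  (forall A, (#|A| <= fk rk 2)%N -> c A = 0) ->
  \sum_(A : {set T} | rk A == r) c A =
    \sum_(A : {set T}) c A -
    \sum_(H : {set T} | is_hyperplane H && (fk rk 2 < #|H|)%N)
       \sum_(A : {set T} | A \subset H) c A.
Proof.
move=> r_gt0 c_small.
have -> : \sum_(H : {set T} | is_hyperplane H && (fk rk 2 < #|H|)%N)
             \sum_(A : {set T} | A \subset H) c A =
          \sum_(H : {set T} | is_hyperplane H) \sum_(A : {set T} | A \subset H) c A.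
  rewrite [RHS](bigID (fun H => fk rk 2 < #|H|)%N) /= [X in _ = _ + X]big1 ?addr0 //.
  move=> H /andP[_]; rewrite -leqNgt => smallH.
  by apply: big1 => A /subset_leq_card/leq_trans/(_ smallH); apply: c_small.
rewrite (exchange_big_dep xpredT) //= big_mkcond -sumrB; apply: eq_bigr => A _.
have [smallA|bigA] := leqP #|A| (fk rk 2).
  by rewrite big1 => [|H _]; rewrite c_small ?subrr ?if_same.
rewrite (eq_bigl [in [set H | is_hyperplane H & A \subset H]]) => [|H]; last first.
  by rewrite inE.
rewrite sumr_const (card_hyperplanes_sup rkM) // ltn_neqAle (rk_le_mrank rkM) andbT.
by case: eqP; rewrite ?subr0 ?subrr.
Qed.

Lemma coef_tutte_at_1 n : (tutte_at_x rk 1)`_n =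
  \sum_(A : {set T} | rk A == r) (nullity_pow int r #|A|)`_n.
Proof.
rewrite coef_sum [RHS]big_mkcond; apply: eq_bigr => A _.
rewrite coefCM subrr expr0n /= subn_eq0; case: eqP => [rkA|/eqP neq_rk].
  by rewrite rkA leqnn mul1r /nullity_pow -rkA (rk_le_card rkM).
by rewrite leqNgt ltn_neqAle neq_rk (rk_le_mrank rkM) mul0r.
Qed.

Lemma coef_tutte_at_1_hyperplanes n : (0 < r)%N -> (fk rk 2 < n + r)%N ->
  (tutte_at_x rk 1)`_n = binz (#|T|%:Z - n%:Z - 1) r.-1 -
    \sum_(H : {set T} | is_hyperplane H && (fk rk 2 < #|H|)%N)
       binz (#|H|%:Z - n%:Z - 1) r.-1.
Proof.
move=> r_gt0 lt_fk; rewrite coef_tutte_at_1 sum_spanning // => [|A smallA]; last first.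
  exact/coef_nullity_pow_small/(leq_ltn_trans smallA).
congr (_ - _); last by apply: eq_bigr => H _; apply: coef_sum_subsets_nullity_pow.
by rewrite -cardsT -coef_sum_subsets_nullity_pow // -(eq_bigl _ _ (@subsetT T)).
Qed.

Lemma sum_hyperplanes_binom : (1 < r)%N -> fk rk 2 = (r - 2)%N ->
  'C(#|T|, r.-1)%:Z =
    \sum_(H : {set T} | is_hyperplane H && (fk rk 2 < #|H|)%N) 'C(#|H|, r.-1)%:Z.
Proof.
move=> r_gt1 fk_eq.
have := sum_spanning (c := fun A => (#|A| == r.-1)%:R : int) (ltnW r_gt1).
rewrite big1 => [|A /eqP rkA]; last first.
  by have := rk_le_card rkM A; rewrite rkA; case: eqP => // ->; lia.
rewrite -(eq_bigl _ _ (@subsetT T)) sum_subsets_card_eq cardsT.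
under eq_bigr do rewrite sum_subsets_card_eq.
have small A : (#|A| <= fk rk 2)%N -> (#|A| == r.-1)%:R = 0 :> int.
  by rewrite fk_eq; case: eqP => // ->; rewrite -subn1; lia.
move=> /(_ small)/esym/eqP; rewrite subr_eq0 natz => /eqP ->.
by apply: eq_bigr => H _; rewrite natz.
Qed.

End TutteCoefficients.

Theorem theorem3p2 (T : finType) (rk : {set T} -> nat) :
  is_matroid rk ->
  (2 <= mrank rk)%N ->
  forall j : int,
    (fk rk 2)%:Z - (mrank rk)%:Z < j ->
    coefz (tutte_at_x rk 1) j =
      binz (#|T|%:Z - j - 1) (mrank rk).-1 -
      \sum_(H : {set T} | is_hyperplane rk H && (fk rk 2 < #|H|)%N)
         binz (#|H|%:Z - j - 1) (mrank rk).-1.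
Proof.
move=> rkM r_gt1 [n|k] lt_j.
  by apply: coef_tutte_at_1_hyperplanes => //; [exact: ltnW | lia].
have fk_ge := mrank_sub_le_fk rkM 2.
have fk_eq : fk rk 2 = (mrank rk - 2)%N by lia.
have -> : k = 0%N by lia.
have shift m : m%:Z - Negz 0 - 1 = m%:Z by lia.
rewrite /= shift; under eq_bigr do rewrite shift.
by rewrite /= -(sum_hyperplanes_binom rkM r_gt1 fk_eq) subrr.
Qed.
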